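(* Let $r,\alpha,p$ be nonnegative integers such that $r+1$ and $p$ are both prime. Then $(r+1)^{\alpha}p\in G_r$ if and only if for every nonnegative integer $t\le\alpha$ we have both $p\neq (r+1)^t+r$ and $(r+1)^t p+r$ is not prime.
   Context: For a positive integer $r$, the $r$-th Schemmel totient function $S_r:\mathbb{N}\to\mathbb{N}_0$ is the multiplicative arithmetic function (so $S_r(1)=1$ and $S_r(ab)=S_r(a)S_r(b)$ for coprime $a,b$) defined on prime powers by $S_r(p^{\alpha})=0$ if $p\le r$ and $S_r(p^\alpha)=p^{\alpha-1}(p-r)$ if $p>r$, for all primes $p$ and positive integers $\alpha$. $G_r$ denotes the set of positive integers not in the range of $S_r$ (Schemmel nontotient numbers of order $r$). *)

From mathcomp Require Import all_boot.
Set Implicit Arguments. Unset Strict Implicit. Unset Printing Implicit Defensive.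

Definition schemmel (r n : nat) : nat :=
  \prod_(p <- primes n) (if p <= r then 0 else p ^ (logn p n).-1 * (p - r)).

(* G_r : positive integers not in the range of S_r (on positive integers). *)
Definition schemmel_nontotient (r m : nat) : Prop :=
  0 < m /\ forall n, 0 < n -> schemmel r n <> m.

From mathcomp Require Import all_boot.
From mathcomp Require Import zify.

Set Implicit Arguments.
Unset Strict Implicit.
Unset Printing Implicit Defensive.

(* Write m := (r+1)^alpha p.  If S_r(n) = m, the prime p divides the local
   factor q^(e-1) (q - r) of some prime q of n, and q - r divides m.  For q = p
   this forces p - r to be a power of r+1; for q <> p it forces q - r = (r+1)^t p,
   making (r+1)^t p + r = q prime.  Conversely n = (r+1)^(alpha+2) when p = r+1,
   n = (r+1)^(alpha-t+1) p^2 when p = (r+1)^t + r with t > 0, and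
   n = (r+1)^(alpha-t+1) q when q = (r+1)^t p + r is prime, all satisfy S_r(n) = m. *)

Definition schemmel_factor (r q e : nat) : nat :=
  if q <= r then 0 else q ^ e.-1 * (q - r).

Lemma schemmelE r n :
  schemmel r n = \prod_(q <- primes n) schemmel_factor r q (logn q n).
Proof. by []. Qed.

Lemma schemmel_factor_dvd r n q :
  q \in primes n -> schemmel_factor r q (logn q n) %| schemmel r n.
Proof.
by move=> qn; rewrite schemmelE (bigD1_seq q) ?primes_uniq //= dvdn_mulr.
Qed.

Lemma prime_dvd_schemmel r n p : prime p -> p %| schemmel r n ->
  exists2 q, q \in primes n & p %| schemmel_factor r q (logn q n).
Proof. by move=> pp; rewrite schemmelE Euclid_dvd_prod // big_has => /hasP. Qed.

Lemma schemmel_prime_pow r q a : prime q -> 0 < a ->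
  schemmel r (q ^ a) = schemmel_factor r q a.
Proof.
move=> pq a_gt0; rewrite schemmelE primesX // primes_prime // big_seq1.
by rewrite lognX logn_prime // eqxx muln1.
Qed.

Lemma schemmel_mul_prime_pow r q s a b : prime q -> prime s -> q != s ->
  0 < a -> 0 < b ->
  schemmel r (q ^ a * s ^ b) = schemmel_factor r q a * schemmel_factor r s b.
Proof.
move=> pq ps qs a_gt0 b_gt0.
have qa_gt0 : 0 < q ^ a by rewrite expn_gt0 prime_gt0.
have sb_gt0 : 0 < s ^ b by rewrite expn_gt0 prime_gt0.
have def_primes : perm_eq (primes (q ^ a * s ^ b)) [:: q; s].
  apply: uniq_perm; [exact: primes_uniq | by rewrite /= inE qs |].
  by move=> x; rewrite primesM // !primesX // !primes_prime // !inE.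
rewrite schemmelE (perm_big _ def_primes) big_cons big_seq1.
rewrite !lognM // !lognX !logn_prime // !eqxx (negbTE qs) eq_sym (negbTE qs).
by rewrite !muln0 addn0 add0n !muln1.
Qed.

Section PowerTimesPrime.

Variables (r alpha p : nat).
Hypotheses (prime_r1 : prime r.+1) (prime_p : prime p).

Let r_gt0 : 0 < r. Proof. by case: r prime_r1. Qed.

Lemma schemmel_factor_r1 a : schemmel_factor r r.+1 a.+1 = r.+1 ^ a.
Proof. by rewrite /schemmel_factor ltnn subSnn muln1. Qed.

Lemma schemmel_r1_pow_mul a q b : prime q -> r.+1 < q -> 0 < b ->
  schemmel r (r.+1 ^ a.+1 * q ^ b) = r.+1 ^ a * (q ^ b.-1 * (q - r)).
Proof.
move=> pq r1_lt_q b_gt0; rewrite schemmel_mul_prime_pow ?neq_ltn ?r1_lt_q //.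
by rewrite schemmel_factor_r1 /schemmel_factor leqNgt ltnW.
Qed.

Lemma schemmel_attains_pow_mul t : t <= alpha ->
  p = r.+1 ^ t + r \/ prime (r.+1 ^ t * p + r) ->
  exists2 n, 0 < n & schemmel r n = r.+1 ^ alpha * p.
Proof.
move=> le_t_alpha.
have pow_gt0 k : 0 < r.+1 ^ k by rewrite expn_gt0.
have split_pow : r.+1 ^ alpha = r.+1 ^ (alpha - t) * r.+1 ^ t.
  by rewrite -expnD subnK.
case=> [def_p | prime_q].
- case: t le_t_alpha split_pow def_p => [|t] _ split_pow def_p.
    exists (r.+1 ^ alpha.+2); first exact: pow_gt0.
    by rewrite schemmel_prime_pow // schemmel_factor_r1 def_p expnS mulnC.
  have r1_lt_p : r.+1 < p by rewrite def_p expnS; have := pow_gt0 t; nia.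
  exists (r.+1 ^ (alpha - t.+1).+1 * p ^ 2).
    by rewrite muln_gt0 pow_gt0 expn_gt0 prime_gt0 // prime_gt0.
  rewrite schemmel_r1_pow_mul // {2}def_p addnK.
  by rewrite split_pow -mulnA [p ^ _ * _]mulnC.
- have r1_lt_q : r.+1 < r.+1 ^ t * p + r.
    by have := pow_gt0 t; have := prime_gt1 prime_p; nia.
  exists (r.+1 ^ (alpha - t).+1 * (r.+1 ^ t * p + r) ^ 1).
    by rewrite muln_gt0 pow_gt0 expn_gt0 prime_gt0 // prime_gt0.
  by rewrite schemmel_r1_pow_mul // addnK mul1n split_pow mulnA.
Qed.

Lemma schemmel_eq_pow_mul_shift n : schemmel r n = r.+1 ^ alpha * p ->
  exists2 t, t <= alpha & p = r.+1 ^ t + r \/ prime (r.+1 ^ t * p + r).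
Proof.
move=> def_m.
have m_gt0 : 0 < r.+1 ^ alpha * p by rewrite muln_gt0 expn_gt0 (prime_gt0 prime_p).
have [q qn p_dvd_f] : exists2 q, q \in primes n &
    p %| schemmel_factor r q (logn q n).
  by apply: prime_dvd_schemmel; rewrite // def_m dvdn_mull.
have f_dvd_m : schemmel_factor r q (logn q n) %| r.+1 ^ alpha * p.
  by rewrite -def_m schemmel_factor_dvd.
have prime_q : prime q by move: qn; rewrite mem_primes => /andP[].
move: p_dvd_f f_dvd_m; rewrite /schemmel_factor.
case: leqP => [_ _|r_lt_q p_dvd_f f_dvd_m]; first by rewrite dvd0n gtn_eqF.
have qr_dvd_m : q - r %| r.+1 ^ alpha * p by apply: dvdn_trans f_dvd_m; exact: dvdn_mull.
have [def_q | q_neq_p] := eqVneq q p.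
- subst q; have coprime_pr : coprime (p - r) p.
    rewrite coprime_sym prime_coprime //; apply/negP => /dvdn_leq.
    by rewrite subn_gt0 => /(_ r_lt_q); lia.
  move: qr_dvd_m; rewrite Gauss_dvdl // => /(dvdn_pfactor _ _ prime_r1) [t le_t def].
  by exists t => //; left; lia.
- move: p_dvd_f; rewrite Euclid_dvdM // Euclid_dvdX // dvdn_prime2 //.
  rewrite eq_sym (negbTE q_neq_p) /= => /dvdnP [d def_qr].
  move: qr_dvd_m; rewrite def_qr dvdn_pmul2r ?prime_gt0 //.
  move=> /(dvdn_pfactor _ _ prime_r1) [t le_t def_d].
  by exists t => //; right; rewrite -def_d -def_qr subnK // ltnW.
Qed.

End PowerTimesPrime.

Theorem lemma2p2 (r alpha p : nat) (hr : prime r.+1) (hp : prime p) :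
  schemmel_nontotient r (r.+1 ^ alpha * p) <->
  (forall t, t <= alpha -> p <> r.+1 ^ t + r /\ ~~ prime (r.+1 ^ t * p + r)).
Proof.
split=> [[_ not_value] t le_t | no_shift].
  have witness := schemmel_attains_pow_mul hr hp le_t.
  split=> [def_p | ].
  - by have [n n_gt0] := witness (or_introl def_p); exact: not_value.
  - apply/negP => prime_q.
    by have [n n_gt0] := witness (or_intror prime_q); exact: not_value.
split; first by rewrite muln_gt0 expn_gt0 (prime_gt0 hp).
move=> n _ /(schemmel_eq_pow_mul_shift hr hp) [t le_t [def_p | prime_q]].
- by have [] := no_shift t le_t.
- by have [_ /negP] := no_shift t le_t.
Qed.
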